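(* Let $x$ be a real number with $x>1$ or $x<0$, and let $$F(s)=\frac{20x^2-56x+35}{(4s^2+x(x-1))^2}-\frac{4(x-1)(2x-3)(2x-1)^2}{(4s^2+x(x-1))^3}.$$ Then $$8x^2(1-x)\int_0^{1/4}\frac{sF(s)}{\sqrt{1-4s}}\,ds=3(x-1)R(x)+5x-6.$$
   Context: For real $x$ with $x>1$ or $x<0$, $R(x)=\sqrt x\,\operatorname{arctanh}\frac1{\sqrt x}$, i.e. $R(x)=\frac{\sqrt x}2\log\frac{\sqrt x+1}{\sqrt x-1}$ if $x>1$ and $R(x)=\sqrt{|x|}\arctan\frac1{\sqrt{|x|}}$ if $x<0$; equivalently, for $|x|>1$, $R(x)=\sum_{k\ge0}\frac{x^{-k}}{2k+1}$. *)

From Stdlib Require Import Reals.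
From Coquelicot Require Import Coquelicot.
Open Scope R_scope.

(* R(x) = sqrt x * arctanh(1/sqrt x), for x > 1 or x < 0 (paper's case split). *)
Definition Rfun (x : R) : R :=
  if Rlt_dec 1 x then sqrt x / 2 * ln ((sqrt x + 1) / (sqrt x - 1))
  else sqrt (- x) * atan (1 / sqrt (- x)).

Definition Ffun (x s : R) : R :=
  (20 * x ^ 2 - 56 * x + 35) / (4 * s ^ 2 + x * (x - 1)) ^ 2
  - 4 * (x - 1) * (2 * x - 3) * (2 * x - 1) ^ 2 / (4 * s ^ 2 + x * (x - 1)) ^ 3.

From Stdlib Require Import Reals Lra Psatz.
From Coquelicot Require Import Coquelicot.
Open Scope R_scope.

(* Substituting t = sqrt (1 - 4 s) turns the integrand into a rational function
   of t whose denominator is a power of Q(t) = (1 - t^2)^2 + 4 x (x - 1) > 0.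
   Its primitive is N(t)/Q(t)^2 + 3/(8 x^2) Rprim (2 x t / (t^2 + 2 x - 1)),
   where Rprim u = sqrt x artanh (u / sqrt x) (resp. sqrt (-x) arctan (u / sqrt (-x)))
   is the primitive of x / (x - u^2), so that Rprim 1 = R(x).  The Moebius map
   fixes t = 0 and t = 1, and the primitive is continuous at t = 0 (s = 1/4),
   so the improper integral is the difference of its values at the endpoints. *)

Lemma is_RInt_gen_at_left_derive (G g : R -> R) (a b : R) :
  a < b ->
  (forall u, a <= u < b -> is_derive G u (g u)) ->
  (forall u, a <= u < b -> continuous g u) ->
  continuous G b ->
  is_RInt_gen g (at_point a) (at_left b) (G b - G a).
Proof.
  intros hab dG cg cGb.
  assert (near : filter_prod (at_point a) (at_left b)
                   (fun uv => fst uv = a /\ a < snd uv < b)).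
  { apply (Filter_prod _ _ _ (fun u => u = a) (fun v => a < v < b)).
    - reflexivity.
    - apply (locally_interval _ b a p_infty); [exact hab | exact I |].
      intros v hav _ hvb. split; [exact hav | exact hvb].
    - intros u v -> hv. split; [reflexivity | exact hv]. }
  apply (filterlimi_lim_ext_loc (fun uv => G (snd uv) - G a)).
  - eapply filter_imp; [| exact near]. intros [u v] [hu hv]; simpl in *; subst u.
    apply (is_RInt_derive G g);
      rewrite Rmin_left, Rmax_right by lra; intros w hw;
      [apply dG | apply cg]; lra.
  - apply (filterlim_comp _ _ _ snd (fun v => G v - G a) _ (at_left b)).
    + apply filterlim_snd.
    + apply (filterlim_filter_le_1 (F := locally b)); [apply filter_le_within |].
      apply (continuous_minus G (fun _ => G a)); [exact cGb | apply continuous_const].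
Qed.

Section Primitive.

Variable x : R.
Hypothesis hx : 1 < x \/ x < 0.

Definition Rprim (u : R) : R :=
  if Rlt_dec 1 x then sqrt x / 2 * ln ((sqrt x + u) / (sqrt x - u))
  else sqrt (- x) * atan (u / sqrt (- x)).

Lemma is_derive_Rprim (u : R) :
  -1 <= u <= 1 -> is_derive Rprim u (x / (x - u ^ 2)).
Proof.
  intros hu. unfold Rprim. destruct (Rlt_dec 1 x) as [hx1 | hx1].
  - assert (hr : 1 < sqrt x) by (rewrite <- sqrt_1; apply sqrt_lt_1; lra).
    assert (hrr : sqrt x * sqrt x = x) by (apply sqrt_sqrt; lra).
    set (r := sqrt x) in *.
    auto_derive.
    + repeat split; try lra. apply Rdiv_lt_0_compat; lra.
    + rewrite <- hrr. field. repeat split; try lra. nra.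
  - assert (hr : 0 < sqrt (- x)) by (apply sqrt_lt_R0; lra).
    assert (hrr : sqrt (- x) * sqrt (- x) = - x) by (apply sqrt_sqrt; lra).
    set (r := sqrt (- x)) in *.
    auto_derive.
    + exact I.
    + replace x with (- (r * r)) by lra. field. split; nra.
Qed.

Lemma Rprim_0 : Rprim 0 = 0.
Proof.
  unfold Rprim. destruct (Rlt_dec 1 x) as [hx1 | hx1].
  - replace ((sqrt x + 0) / (sqrt x - 0)) with 1.
    + rewrite ln_1. ring.
    + assert (0 < sqrt x) by (apply sqrt_lt_R0; lra). field. lra.
  - unfold Rdiv. rewrite Rmult_0_l, atan_0. ring.
Qed.

Definition quartic (t : R) : R := t ^ 4 - 2 * t ^ 2 + (2 * x - 1) ^ 2.

Definition mobius (t : R) : R := 2 * x * t / (t ^ 2 + 2 * x - 1).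

(* Obtained by Hermite reduction of the integrand in t. *)
Definition Kprim_numer (t : R) : R :=
  ((3 + 86 * x - 156 * x ^ 2 + 72 * x ^ 3) * t
   + (-9 - 40 * x + 68 * x ^ 2 - 32 * x ^ 3) * t ^ 3
   + (9 + 2 * x) * t ^ 5 - 3 * t ^ 7) / (4 * x).

Definition Kprim (t : R) : R :=
  Kprim_numer t / quartic t ^ 2 + 3 / (8 * x ^ 2) * Rprim (mobius t).

Definition Gprim (s : R) : R := Kprim (sqrt (1 - 4 * s)).

Lemma quartic_pos (t : R) : 0 < quartic t.
Proof.
  unfold quartic.
  assert (0 < x * (x - 1)) by (destruct hx; nra).
  assert (0 <= (t ^ 2 - 1) ^ 2) by apply pow2_ge_0.
  nra.
Qed.

Lemma mobius_bound (t : R) : 0 <= t <= 1 -> -1 <= mobius t <= 1.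
Proof.
  intros ht. unfold mobius.
  destruct hx as [hx1 | hx0].
  - assert (hd : 0 < t ^ 2 + 2 * x - 1) by nra.
    split; apply Rmult_le_reg_r with (1 := hd); field_simplify; nra.
  - assert (hd : 0 < - (t ^ 2 + 2 * x - 1)) by nra.
    replace (2 * x * t / (t ^ 2 + 2 * x - 1)) with (- 2 * x * t / - (t ^ 2 + 2 * x - 1))
      by (field; lra).
    split; apply Rmult_le_reg_r with (1 := hd); field_simplify; nra.
Qed.

Lemma is_derive_mobius (t : R) :
  t ^ 2 + 2 * x - 1 <> 0 ->
  is_derive mobius t (2 * x * (2 * x - 1 - t ^ 2) / (t ^ 2 + 2 * x - 1) ^ 2).
Proof. intros hd. unfold mobius. auto_derive; [exact hd | field; exact hd]. Qed.

Lemma is_derive_Kprim (t : R) :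
  0 <= t <= 1 -> is_derive Kprim t (- (1 - t ^ 2) / 8 * Ffun x ((1 - t ^ 2) / 4)).
Proof.
  intros ht.
  assert (hx0 : x <> 0) by (destruct hx; lra).
  assert (hQ := quartic_pos t).
  assert (hd : t ^ 2 + 2 * x - 1 <> 0) by (destruct hx; nra).
  assert (dm := is_derive_mobius t hd).
  assert (dR := is_derive_Rprim _ (mobius_bound t ht)).
  assert (hxu : x - mobius t ^ 2 = x * quartic t / (t ^ 2 + 2 * x - 1) ^ 2)
    by (unfold mobius, quartic; field; exact hd).
  rewrite hxu in dR.
  unfold Kprim, Kprim_numer, quartic. auto_derive.
  - repeat split; [unfold quartic in hQ; nra | eexists; exact dR | eexists; exact dm].
  - rewrite (is_derive_unique (fun v : R => mobius v) _ _ dm),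
      (is_derive_unique (fun v : R => Rprim v) _ _ dR).
    unfold Ffun, quartic in *. field. repeat split; [nra | exact hd | lra | exact hx0].
Qed.

Lemma is_derive_Gprim (s : R) :
  0 <= s < 1 / 4 -> is_derive Gprim s (s * Ffun x s / sqrt (1 - 4 * s)).
Proof.
  intros hs.
  assert (ht0 : 0 < sqrt (1 - 4 * s)) by (apply sqrt_lt_R0; lra).
  assert (htt : sqrt (1 - 4 * s) ^ 2 = 1 - 4 * s) by (apply pow2_sqrt; lra).
  assert (ht1 : sqrt (1 - 4 * s) <= 1)
    by (rewrite <- sqrt_1 at 2; apply sqrt_le_1_alt; lra).
  assert (dK := is_derive_Kprim _ (conj (Rlt_le _ _ ht0) ht1)).
  rewrite htt in dK.
  replace ((1 - (1 - 4 * s)) / 4) with s in dK by field.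
  unfold Gprim. auto_derive.
  - split; [eexists; exact dK | lra].
  - replace (1 + - (4 * s)) with (1 - 4 * s) by ring.
    rewrite (is_derive_unique (fun t : R => Kprim t) _ _ dK).
    field. lra.
Qed.

Lemma continuous_integrand (s : R) :
  s < 1 / 4 -> continuous (fun s => s * Ffun x s / sqrt (1 - 4 * s)) s.
Proof.
  intros hs. apply (@ex_derive_continuous R_AbsRing R_NormedModule).
  assert (hden : 0 < 4 * s ^ 2 + x * (x - 1)) by (destruct hx; nra).
  assert (hsq : 0 < sqrt (1 - 4 * s)) by (apply sqrt_lt_R0; lra).
  unfold Ffun. auto_derive. fold (1 - 4 * s). simpl in hden.
  repeat split; try lra; apply Rgt_not_eq; repeat apply Rmult_lt_0_compat; lra.
Qed.

Lemma continuous_Gprim_quarter : continuous Gprim (1 / 4).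
Proof.
  unfold Gprim.
  apply (continuous_comp (fun s => sqrt (1 - 4 * s)) Kprim).
  - apply (continuous_comp (fun s => 1 - 4 * s) sqrt).
    + apply (@ex_derive_continuous R_AbsRing R_NormedModule). auto_derive. exact I.
    + apply continuity_pt_filterlim, continuity_pt_sqrt. lra.
  - replace (1 - 4 * (1 / 4)) with 0 by field. rewrite sqrt_0.
    apply (@ex_derive_continuous R_AbsRing R_NormedModule).
    eexists. apply is_derive_Kprim. lra.
Qed.

Lemma Kprim_0 : Kprim 0 = 0.
Proof.
  unfold Kprim, Kprim_numer, mobius.
  replace (2 * x * 0 / (0 ^ 2 + 2 * x - 1)) with 0 by (unfold Rdiv; ring).
  rewrite Rprim_0. unfold Rdiv. ring.
Qed.

Lemma Kprim_1 : 8 * x ^ 2 * (x - 1) * Kprim 1 = 3 * (x - 1) * Rfun x + 5 * x - 6.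
Proof.
  assert (hx0 : x <> 0) by (destruct hx; lra).
  assert (hx1 : x - 1 <> 0) by (destruct hx; lra).
  assert (hm : mobius 1 = 1) by (unfold mobius; field; lra).
  assert (hR : Rprim 1 = Rfun x) by reflexivity.
  unfold Kprim, Kprim_numer, quartic. rewrite hm, hR.
  field. repeat split; try lra. nra.
Qed.

End Primitive.

Theorem lemma5p2 (x : R) (hx : 1 < x \/ x < 0) :
  exists I : R,
    is_RInt_gen (fun s => s * Ffun x s / sqrt (1 - 4 * s))
      (at_point 0) (at_left (1 / 4)) I /\
    8 * x ^ 2 * (1 - x) * I = 3 * (x - 1) * Rfun x + 5 * x - 6.
Proof.
  exists (Gprim x (1 / 4) - Gprim x 0). split.
  - apply is_RInt_gen_at_left_derive.
    + lra.
    + apply is_derive_Gprim, hx.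
    + intros s hs. apply continuous_integrand; [exact hx | lra].
    + apply continuous_Gprim_quarter, hx.
  - unfold Gprim.
    replace (1 - 4 * (1 / 4)) with 0 by field.
    replace (1 - 4 * 0) with 1 by ring.
    rewrite sqrt_0, sqrt_1, Kprim_0, <- (Kprim_1 x hx).
    ring.
Qed.
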